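(* Let $H$ be a 5-vertex 3-graph which is $C_5$-free and $J_4$-free, contains a copy of $K_4^3$, and has complete shadow graph. Then $H$ is isomorphic to the 3-graph $H_4$ with vertex set $[5]$ and edges $123,234,134,124,514,523$.
   Context: A 3-graph is a 3-uniform hypergraph. $K_4^3$ is the complete 3-graph on 4 vertices (edges $123,124,134,234$); $C_5$ has vertex set $[5]$ and edges $123,234,345,145,125$; $J_4$ has vertex set $[5]$ and edges $123,124,125,134,135,145$. $H$ is $F$-free if it has no (not necessarily induced) subhypergraph isomorphic to $F$. The shadow graph of $H$ is the graph on $V(H)$ in which a pair is an edge iff it is contained in some edge of $H$; it is complete if every pair of vertices is such an edge. *)

From mathcomp Require Import all_boot.
Set Implicit Arguments. Unset Strict Implicit. Unset Printing Implicit Defensive.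

Definition is_3graph (V : finType) (E : {set {set V}}) : Prop :=
  forall e, e \in E -> #|e| = 3.

(* F (on vertex set VF) is a (not necessarily induced) subhypergraph of H
   up to isomorphism: an injective vertex map sending edges of F to edges of H. *)
Definition contains_copy (VF V : finType) (F : {set {set VF}}) (E : {set {set V}}) : Prop :=
  exists f : VF -> V, injective f /\ forall e, e \in F -> f @: e \in E.

Definition free_of (VF V : finType) (F : {set {set VF}}) (E : {set {set V}}) : Prop :=
  ~ contains_copy F E.

Definition complete_shadow (V : finType) (E : {set {set V}}) : Prop :=
  forall x y : V, x != y -> exists2 e, e \in E & (x \in e) && (y \in e).

Definition hiso (V W : finType) (E : {set {set V}}) (F : {set {set W}}) : Prop :=
  exists f : V -> W, bijective f /\ forall e : {set V}, (e \in E) = (f @: e \in F).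

(* Vertices 1..5 of the paper are encoded as 0..4 of 'I_5. *)
Definition tr5 (a b c : nat) : {set 'I_5} := [set inord a.-1; inord b.-1; inord c.-1].

Definition K43 : {set {set 'I_4}} := [set e : {set 'I_4} | #|e| == 3].

Definition C5 : {set {set 'I_5}} :=
  [set tr5 1 2 3; tr5 2 3 4; tr5 3 4 5; tr5 1 4 5; tr5 1 2 5].

Definition J4 : {set {set 'I_5}} :=
  [set tr5 1 2 3; tr5 1 2 4; tr5 1 2 5; tr5 1 3 4; tr5 1 3 5; tr5 1 4 5].

Definition H4 : {set {set 'I_5}} :=
  [set tr5 1 2 3; tr5 2 3 4; tr5 1 3 4; tr5 1 2 4; tr5 5 1 4; tr5 5 2 3].

(* The four vertices of a copy of K_4^3 span every triple avoiding the fifth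
   vertex v, so H is determined by the link graph L of v on the other four
   vertices.  A complete shadow leaves no vertex isolated in L, J_4-freeness
   forbids a vertex of degree 3 in L, and C_5-freeness forbids a path a-b-c-d
   in L, as abv, bvc, vcd, cda, dab would form a C_5.  If x had two neighbours
   y, z, the fourth vertex w would need a neighbour, and each choice creates a
   claw at x or a path through x; so L is a perfect matching, which is H_4
   with apex 5 and matching 14, 23. *)

From mathcomp Require Import all_boot.
Set Implicit Arguments. Unset Strict Implicit. Unset Printing Implicit Defensive.

Section FiniteSets.
Variable T : finType.
Implicit Types (a b c x : T) (s : seq T) (e : {set T}).

Lemma exists_fresh s : size s < #|T| -> exists x, x \notin s.
Proof.
move=> ltsT; case: (pickP [pred x | x \notin s]) => [x xNs | s_full]; first by exists x.
suff : #|T| <= size s by rewrite leqNgt ltsT.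
apply: leq_trans (card_size s); apply: subset_leq_card; apply/subsetP => x _.
by have := s_full x; rewrite /= => /negbFE.
Qed.

Lemma mem_uniq_full s x : uniq s -> #|T| <= size s -> x \in s.
Proof.
move=> us leTs; apply/negPn/negP => xNs.
have := max_card (mem (x :: s)); rewrite (card_uniqP _) /= ?xNs //.
by rewrite ltnNge leTs.
Qed.

Lemma set3_card3 a b c : (#|[set a; b; c]| == 3) = uniq [:: a; b; c].
Proof.
rewrite (@eq_card _ _ (mem [:: a; b; c])) => [|x]; last by rewrite !inE orbA.
by apply/eqP/card_uniqP.
Qed.

Lemma set3C12 a b c : [set a; b; c] = [set b; a; c].
Proof. by rewrite (setUC [set a]). Qed.

Lemma set3C23 a b c : [set a; b; c] = [set a; c; b].
Proof. exact: setUAC. Qed.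

Lemma card3_mem e a : #|e| = 3 -> a \in e -> exists b c, e = [set a; b; c].
Proof.
move=> e3 ae; have /cards2P[b [c [_ ebc]]] : #|e :\ a| == 2.
  by move: e3; rewrite (cardsD1 a) ae add1n => -[->].
exists b, c; rewrite -(setD1K ae) ebc; apply/setP => x; by rewrite !inE orbA.
Qed.

Lemma card3_notin e a : #|T| = 5 -> #|e| = 3 -> a \notin e ->
  exists2 b, b != a & e = ~: [set a; b].
Proof.
move=> T5 e3 aNe; have /cards2P[x [y [xy eCxy]]] : #|~: e| == 2.
  by rewrite cardsCs setCK e3 T5.
have : a \in ~: e by rewrite inE.
rewrite eCxy !inE => /orP[]/eqP-> ; [exists y | exists x].
- by rewrite eq_sym.
- by rewrite -eCxy setCK.
- by [].
- by rewrite setUC -eCxy setCK.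
Qed.

End FiniteSets.

Lemma imset_set3 (T U : finType) (g : T -> U) (a b c : T) :
  g @: [set a; b; c] = [set g a; g b; g c].
Proof. by rewrite !imsetU !imset_set1. Qed.

Definition lab5 (T : Type) (x0 x1 x2 x3 x4 : T) (i : 'I_5) : T :=
  nth x0 [:: x0; x1; x2; x3; x4] i.

Lemma lab5_inj (T : eqType) (x0 x1 x2 x3 x4 : T) :
  uniq [:: x0; x1; x2; x3; x4] -> injective (lab5 x0 x1 x2 x3 x4).
Proof.
move=> u i j /eqP; rewrite /lab5 nth_uniq ?ltn_ord // => /eqP; exact: val_inj.
Qed.

Lemma ord5_ind (P : 'I_5 -> Prop) :
  P (inord 0) -> P (inord 1) -> P (inord 2) -> P (inord 3) -> P (inord 4) ->
  forall i, P i.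
Proof.
move=> P0 P1 P2 P3 P4 [k ltk5]; rewrite -[Ordinal _]inord_val /=.
by case: k ltk5 => [|[|[|[|[|//]]]]].
Qed.

Lemma hiso_of_imset (V W : finType) (E : {set {set V}}) (F : {set {set W}})
    (g : W -> V) :
  bijective g -> (forall e : {set W}, (g @: e \in E) = (e \in F)) -> hiso E F.
Proof.
case=> h hK gK gE; exists h; split; first by exists g.
by move=> e; rewrite -gE -imset_comp (eq_imset _ gK) imset_id.
Qed.

Definition clique_cone (V : finType) (v : V) (p : V -> V) : {set {set V}} :=
  [set e : {set V} | (#|e| == 3) && (v \notin e)]
    :|: [set [set v; x; p x] | x in [set~ v]].

Lemma mem_imset_clique_cone (W V : finType) (g : W -> V) (w : W) (q : W -> W)
    (v : V) (p : V -> V) (e : {set W}) :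
  injective g -> g w = v -> {morph g : x / q x >-> p x} ->
  (g @: e \in clique_cone v p) = (e \in clique_cone w q).
Proof.
move=> g_inj gw gq; rewrite !inE card_imset // -gw mem_imset //; congr (_ || _).
apply/imsetP/imsetP => [[x xNv ge] | [y yNw ->]]; last first.
  exists (g y); last by rewrite imset_set3 gq.
  by rewrite !inE (inj_eq g_inj) -in_setC1.
have /imsetP[y ye gy] : x \in g @: e by rewrite ge !inE eqxx orbT.
rewrite {}gy !inE (inj_eq g_inj) in xNv ge; exists y; rewrite ?inE //.
by apply: (imset_inj g_inj); rewrite ge imset_set3 gq.
Qed.

Ltac solve_uniq :=
  rewrite /= !inE !negb_or ?andbT; do ?[apply/andP; split]; by [|rewrite eq_sym].

(* The matching 14 | 23 of H_4, fixing its apex 5. *)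
Definition h4_mate : 'I_5 -> 'I_5 :=
  lab5 (inord 3) (inord 2) (inord 1) (inord 0) (inord 4).

Lemma H4_clique_cone : H4 = clique_cone (inord 4) h4_mate.
Proof.
apply/eqP; rewrite eqEsubset; apply/andP; split.
  rewrite !subUset !sub1set; do !(apply/andP; split);
    rewrite !inE /tr5 set3_card3 /= !inE -!val_eqE /= !inordK //=; apply/imsetP;
    [exists (inord 0) | exists (inord 1)];
    by rewrite /h4_mate /lab5 ?inE -?val_eqE /= ?inordK.
apply/subsetP => e; rewrite !inE => /orP[/andP[/eqP e3 e4] | /imsetP[x]].
  have [b] := card3_notin (card_ord 5) e3 e4; elim/ord5_ind: b => b4 ->{e e3 e4};
    [ rewrite (_ : ~: _ = tr5 2 3 4) | rewrite (_ : ~: _ = tr5 1 3 4)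
    | rewrite (_ : ~: _ = tr5 1 2 4) | rewrite (_ : ~: _ = tr5 1 2 3)
    | by rewrite eqxx in b4 ]; rewrite ?inE ?eqxx ?orbT //;
    by apply/setP; elim/ord5_ind; rewrite !inE -!val_eqE /= !inordK.
elim/ord5_ind: x; rewrite !inE /h4_mate /lab5 ?inordK //= => x4 ->;
  by [rewrite eqxx ?orbT | rewrite set3C23 eqxx ?orbT | rewrite eqxx in x4].
Qed.

Lemma clique_cone_iso_H4 (V : finType) (v : V) (p : V -> V) :
  #|V| = 5 -> involutive p -> p v = v -> (forall x, x != v -> p x != x) ->
  hiso (clique_cone v p) H4.
Proof.
move=> V5 pK pv p_neq.
have p_eq_v x : (p x == v) = (x == v) by rewrite -{1}pv (can_eq pK).
have [a] : exists a, a \notin [:: v] by apply: exists_fresh; rewrite V5.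
rewrite inE => av.
have [b] : exists b, b \notin [:: v; a; p a] by apply: exists_fresh; rewrite V5.
rewrite !inE !negb_or => /and3P[bv ba bpa].
pose g := lab5 a b (p b) (p a) v.
have g_inj : injective g.
  apply: lab5_inj.
  have apb : a != p b by rewrite eq_sym (can2_eq pK pK).
  have pbpa : p b != p a by rewrite (can_eq pK).
  have pav : p a != v by rewrite p_eq_v.
  have pbv : p b != v by rewrite p_eq_v.
  have paa := p_neq _ av; have pbb := p_neq _ bv; solve_uniq.
apply: (@hiso_of_imset _ _ _ _ g).
  by apply: (inj_card_bij g_inj); rewrite card_ord V5.
move=> e; rewrite H4_clique_cone; apply: mem_imset_clique_cone => //.
  by rewrite /g /lab5 inordK.
move=> i; elim/ord5_ind: i; rewrite /g /h4_mate /lab5 !inordK //= inordK //=.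
Qed.

Lemma K43_copy_apex (V : finType) (E : {set {set V}}) :
  #|V| = 5 -> contains_copy K43 E ->
  exists v : V, forall e : {set V}, #|e| = 3 -> v \notin e -> e \in E.
Proof.
move=> V5 [f [f_inj fE]].
have [v vNf] : exists v, v \notin codom f.
  by apply: exists_fresh; rewrite size_codom card_ord V5.
have codom_full x : x != v -> x \in codom f.
  move=> xv; have : x \in v :: codom f.
    apply: mem_uniq_full; last by rewrite /= size_codom card_ord V5.
    by rewrite /= vNf; apply/card_uniqP; rewrite size_codom card_codom.
  by rewrite inE (negbTE xv).
exists v => e e3 vNe.
have f_pre : f @: [set i | f i \in e] = e.
  apply/setP => x; apply/imsetP/idP => [[i] | xe]; first by rewrite inE => fie ->.
  have /codomP[i xi] : x \in codom f by apply: codom_full; apply: contraNneq vNe => <-.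
  by exists i; rewrite // inE -xi.
by rewrite -f_pre; apply: fE; rewrite inE -(card_imset _ f_inj) f_pre e3.
Qed.

Lemma contains_copy_lab5 (V : finType) (F : {set {set 'I_5}}) (E : {set {set V}})
    (x0 x1 x2 x3 x4 : V) :
  uniq [:: x0; x1; x2; x3; x4] ->
  F \subset [set e : {set 'I_5} | lab5 x0 x1 x2 x3 x4 @: e \in E] -> contains_copy F E.
Proof.
move=> u /subsetP FE; exists (lab5 x0 x1 x2 x3 x4); split; first exact: lab5_inj.
by move=> e /FE; rewrite inE.
Qed.

Section LinkGraph.

Variables (V : finType) (E : {set {set V}}) (v : V).
Hypotheses (V5 : #|V| = 5) (E3 : is_3graph E).
Hypotheses (C5_free : free_of C5 E) (J4_free : free_of J4 E).
Hypothesis E_shadow : complete_shadow E.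
Hypothesis E_clique : forall e : {set V}, #|e| = 3 -> v \notin e -> e \in E.

Definition link_edge (x y : V) := [set v; x; y] \in E.

Lemma link_neq x y : link_edge x y -> [/\ x != v, y != v & x != y].
Proof.
move/E3/eqP; rewrite set3_card3 /= !inE !negb_or andbT => /andP[/andP[vx vy] ->].
by rewrite !(eq_sym _ v) vx vy.
Qed.

Lemma link_sym x y : link_edge x y = link_edge y x.
Proof. by rewrite /link_edge set3C23. Qed.

Lemma clique_edge x y z : uniq [:: v; x; y; z] -> [set x; y; z] \in E.
Proof.
case/andP=> vNxyz xyz; apply: E_clique; first by apply/eqP; rewrite set3_card3.
by move: vNxyz; rewrite !inE orbA.
Qed.

Lemma link_exists x : x != v -> exists y, link_edge x y.
Proof.
move=> xv; have [e eE /andP[xe ve]] := E_shadow xv.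
have [y [z ez]] := card3_mem (E3 eE) ve.
move: xe; rewrite ez !inE (negbTE xv) /= => /orP[]/eqP->; [exists z | exists y].
  by rewrite /link_edge -ez.
by rewrite /link_edge set3C23 -ez.
Qed.

Lemma link_no_claw x a b c : link_edge x a -> link_edge x b -> link_edge x c ->
  a != b -> a != c -> b != c -> False.
Proof.
move=> xa xb xc ab ac bc; have [xv av xa'] := link_neq xa.
have [_ bv xb'] := link_neq xb; have [_ cv xc'] := link_neq xc.
apply: J4_free; apply: (@contains_copy_lab5 _ _ _ x v a b c); first by solve_uniq.
rewrite !subUset !sub1set !inE /tr5 !imset_set3 /lab5 !inordK //=.
do !(apply/andP; split); by [rewrite set3C12 | apply: clique_edge; solve_uniq].
Qed.

Lemma link_no_P4 a b c d : link_edge a b -> link_edge b c -> link_edge c d ->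
  a != c -> a != d -> b != d -> False.
Proof.
move=> ab bc cd ac ad bd; have [av bv ab'] := link_neq ab.
have [_ cv bc'] := link_neq bc; have [_ dv cd'] := link_neq cd.
apply: C5_free; apply: (@contains_copy_lab5 _ _ _ a b v c d); first by solve_uniq.
rewrite !subUset !sub1set !inE /tr5 !imset_set3 /lab5 !inordK //=.
do !(apply/andP; split);
  by [|rewrite set3C12|rewrite set3C23 set3C12|apply: clique_edge; solve_uniq].
Qed.

Lemma link_unique x y z : link_edge x y -> link_edge x z -> y = z.
Proof.
move=> xy xz; apply/eqP/contraT => yz; exfalso.
have [xv yv xy'] := link_neq xy; have [_ zv xz'] := link_neq xz.
have [w] : exists w, w \notin [:: v; x; y; z] by apply: exists_fresh; rewrite V5.
rewrite !inE !negb_or => /and4P[wv wx wy wz].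
have [u wu] := link_exists wv; have [_ uv wu'] := link_neq wu.
have : u \in [:: v; x; y; z; w] by apply: mem_uniq_full; [solve_uniq | rewrite V5].
rewrite !inE (negbTE uv) (eq_sym u w) (negbTE wu') orbF /=.
case/or3P=> /eqP uE; subst u.
- by apply: (link_no_claw _ xy xz wy wz yz); rewrite link_sym.
- by apply: (link_no_P4 wu _ xz wx wz yz); rewrite link_sym.
- by apply: (link_no_P4 wu _ xy wx wy); rewrite 1?link_sym // eq_sym.
Qed.

Definition mate (x : V) : V := odflt x [pick y | link_edge x y].

Lemma link_mate x : x != v -> link_edge x (mate x).
Proof.
move=> xv; rewrite /mate; case: pickP => [y // | no_link].
by have [y xy] := link_exists xv; rewrite no_link in xy.
Qed.

Lemma mate_apex : mate v = v.
Proof. by rewrite /mate; case: pickP => [y /link_neq[] | //]; rewrite eqxx. Qed.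

Lemma mateK : involutive mate.
Proof.
move=> x; have [-> | xv] := eqVneq x v; first by rewrite !mate_apex.
have [_ mxv _] := link_neq (link_mate xv).
by apply: (link_unique (link_mate mxv)); rewrite link_sym link_mate.
Qed.

Lemma mate_neq x : x != v -> mate x != x.
Proof. by move=> xv; have [_ _] := link_neq (link_mate xv); rewrite eq_sym. Qed.

Lemma E_clique_cone : E = clique_cone v mate.
Proof.
apply/setP => e; rewrite !inE; have [ve | vNe] := boolP (v \in e); last first.
  rewrite andbT; apply/idP/orP => [eE | [/eqP e3 | /imsetP[x _ ex]]].
  - by left; rewrite E3.
  - exact: E_clique.
  - by rewrite ex !inE eqxx in vNe.
rewrite andbF /=; apply/idP/imsetP => [eE | [x xv ->]].
  have [x [y exy]] := card3_mem (E3 eE) ve.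
  have xy : link_edge x y by rewrite /link_edge -exy.
  have [xv _ _] := link_neq xy.
  by exists x; rewrite ?inE // (link_unique (link_mate xv) xy).
by rewrite !inE in xv; apply: link_mate.
Qed.

End LinkGraph.

Theorem lemma2p14 (V : finType) (E : {set {set V}}) :
  #|V| = 5 ->
  is_3graph E ->
  free_of C5 E ->
  free_of J4 E ->
  contains_copy K43 E ->
  complete_shadow E ->
  hiso E H4.
Proof.
move=> V5 E3 C5_free J4_free /(K43_copy_apex V5)[v E_clique] E_shadow.
rewrite (E_clique_cone V5 E3 C5_free J4_free E_shadow E_clique).
apply: clique_cone_iso_H4 => //; [exact: mateK | exact: mate_apex | exact: mate_neq].
Qed.
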